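(* For natural numbers $n\ge1$, $k\ge 3$ and $k_1,\dots,k_n\ge 3$, the total domination polynomials of the lollipop graph $L(n,1)$, of the firecracker graph $F(n,k)$, and of the generalized firecracker graph $F(k_1,\dots,k_n)$ are unimodal.
   Context: $L(n,1)$ is the complete graph $K_n$ with one extra vertex joined by a pendant edge to one vertex of $K_n$. For $k\ge 3$, $S_k$ denotes the star with $k$ vertices ($K_{1,k-1}$). The generalized firecracker $F(k_1,\dots,k_n)$ is obtained from stars $S_{k_1},\dots,S_{k_n}$ by choosing one leaf $\ell_i$ of $S_{k_i}$ for each $i$ and adding the edges $\ell_i\ell_{i+1}$ ($1\le i<n$); $F(n,k)=F(k,\dots,k)$ ($n$ copies). For a finite simple graph $G=(V,E)$, a set $D\subseteq V$ is a total dominating set if every vertex of $V$ is adjacent to some vertex of $D$; $d_t(G,i)$ is the number of total dominating sets of size $i$, and $D_t(G,x)=\sum_{i} d_t(G,i)x^i$. A polynomial $\sum a_ix^i$ is unimodal if its coefficient sequence $a_0,\dots,a_N$ satisfies $a_0\le\dots\le a_k\ge a_{k+1}\ge\dots\ge a_N$ for some $k$. *)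

From mathcomp Require Import all_boot all_order all_algebra.
Set Implicit Arguments. Unset Strict Implicit. Unset Printing Implicit Defensive.
Import Order.TTheory GRing.Theory Num.Theory.

(* A finite simple graph is a symmetric irreflexive relation e on a finType T. *)

Definition total_dominating (T : finType) (e : rel T) (D : {set T}) : bool :=
  [forall v, [exists u in D, e v u]].

Definition dt (T : finType) (e : rel T) (i : nat) : nat :=
  #|[set D : {set T} | total_dominating e D & #|D| == i]|.

(* D_t(G,x) = sum_i d_t(G,i) x^i  (d_t(G,i) = 0 for i > |V|) *)
Definition Dt (T : finType) (e : rel T) : {poly int} :=
  \poly_(i < #|T|.+1) ((dt e i)%:R)%R.

Definition unimodal (p : {poly int}) : Prop :=
  exists k : nat,
    (forall i, (i < k)%N -> (p`_i <= p`_i.+1)%R) /\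
    (forall i, (k <= i)%N -> (i.+1 < size p)%N -> (p`_i.+1 <= p`_i)%R).

(* Lollipop L(n,1): vertices 0..n; 0..n-1 form K_n, vertex n is pendant to 0. *)
Definition lollipop_adj (n : nat) : rel 'I_n.+1 :=
  fun x y => (x != y) &&
    [|| ((x < n) && (y < n))%N,
        ((x == n :> nat) && (y == 0 :> nat)) |
        ((x == 0 :> nat) && (y == n :> nat))].

(* Generalized firecracker F(k_1,...,k_n): vertex (i, j) with j < k_i;
   j = 0 is the center of star S_{k_i}, j = 1 is the chosen leaf l_i,
   j >= 2 the other leaves. Edges: center-leaf within a star, and l_i l_{i+1}. *)
Definition gfirecracker_adj (n : nat) (k : 'I_n -> nat) :
    rel {i : 'I_n & 'I_(k i)} :=
  fun x y =>
    ((tag x == tag y) &&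
       [|| ((tagged x == 0 :> nat) && (tagged y != 0 :> nat)) |
           ((tagged y == 0 :> nat) && (tagged x != 0 :> nat))])
    || [&& (tagged x == 1 :> nat), (tagged y == 1 :> nat) &
           (((tag x).+1 == tag y :> nat) || ((tag y).+1 == tag x :> nat))].

Definition firecracker_adj (n k : nat) := @gfirecracker_adj n (fun _ => k).

(* Call a nonnegative sequence PF2 (a Polya frequency sequence of
   order 2) when all 2 x 2 minors of its lower triangular Toeplitz matrix are
   nonnegative.  The Toeplitz matrix of a convolution is the product of the
   Toeplitz matrices, so by the 2 x 2 Cauchy-Binet formula PF2 sequences, and
   hence polynomials with PF2 coefficients, are closed under products.  A
   nonnegative sequence is PF2 iff it is log-concave without internal zeros,
   and such a sequence is unimodal.
   On the graph side, both graphs are built from pieces in which a set is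
   total dominating iff it contains a distinguished vertex c (the center of a
   star, or the vertex of K_n carrying the pendant edge) and some other vertex
   of the piece.  Counting these sets by size gives x ((1 + x)^m - 1) for a
   piece with m + 1 vertices, whose coefficients are binomial, hence
   log-concave without internal zeros; for the firecracker the condition is
   checked star by star, so its polynomial is the product over the stars. *)
From mathcomp Require Import all_boot all_order all_algebra zify ring lra.
Set Implicit Arguments. Unset Strict Implicit. Unset Printing Implicit Defensive.
Import Order.TTheory GRing.Theory Num.Theory.
Local Open Scope ring_scope.

Definition toeplitz (a : nat -> int) (r s : nat) : int :=
  if (s <= r)%N then a (r - s)%N else 0.

Definition convolution (a b : nat -> int) (n : nat) : int :=
  \sum_(j < n.+1) a j * b (n - j)%N.

Definition PF2 (a : nat -> int) : Prop :=
  (forall n, 0 <= a n) /\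
  (forall r1 r2 s1 s2, (r1 <= r2)%N -> (s1 <= s2)%N ->
     toeplitz a r1 s2 * toeplitz a r2 s1 <= toeplitz a r1 s1 * toeplitz a r2 s2).

(* The 2 x 2 Cauchy-Binet formula: a 2 x 2 minor of a product of matrices is
   the sum over pairs of columns s < t of products of 2 x 2 minors. *)
Lemma cauchy_binet_2x2 N (A1 A2 B1 B2 : nat -> int) :
  (\sum_(t < N) A1 t * B1 t) * (\sum_(t < N) A2 t * B2 t)
  - (\sum_(t < N) A1 t * B2 t) * (\sum_(t < N) A2 t * B1 t)
  = \sum_(t < N) \sum_(s < t)
      (A1 s * A2 t - A1 t * A2 s) * (B1 s * B2 t - B1 t * B2 s).
Proof.
elim: N => [|N IH]; first by rewrite !big_ord0; ring.
rewrite !big_ord_recr /=.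
have -> : \sum_(s < N) (A1 s * A2 N - A1 N * A2 s) * (B1 s * B2 N - B1 N * B2 s)
  = A2 N * B2 N * (\sum_(s < N) A1 s * B1 s) - A2 N * B1 N * (\sum_(s < N) A1 s * B2 s)
    - A1 N * B2 N * (\sum_(s < N) A2 s * B1 s) + A1 N * B1 N * (\sum_(s < N) A2 s * B2 s).
  by rewrite !mulr_sumr -!sumrB -big_split /=; apply: eq_bigr => s _; ring.
by rewrite -IH; ring.
Qed.

(* The Toeplitz matrix of a convolution is the product of the Toeplitz
   matrices; a row r < N only involves the first N columns. *)
Lemma toeplitz_convolution a b N r s : (r < N)%N ->
  toeplitz (convolution a b) r s = \sum_(t < N) toeplitz b r t * toeplitz a t s.
Proof.
move=> rN; case: (leqP s r) => sr; last first.
  rewrite /toeplitz ifF; last lia.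
  rewrite big1 // => t _; case: (leqP s t) => st; last by rewrite mulr0.
  by rewrite ifF ?mul0r //; lia.
(* only the columns s <= t <= r contribute *)
rewrite -(big_mkord xpredT (fun t => toeplitz b r t * toeplitz a t s)).
rewrite (big_cat_nat _ (n := s)) //=; last lia.
rewrite (big_cat_nat _ (m := s) (n := r.+1)) //=; last lia.
rewrite [X in X + _]big1_seq; last first.
  move=> t /andP [_]; rewrite mem_index_iota => /andP [_ ts].
  by rewrite /toeplitz [X in _ * X]ifF ?mulr0 //; lia.
rewrite [X in _ + (_ + X)]big1_seq; last first.
  move=> t /andP [_]; rewrite mem_index_iota => /andP [rt _].
  by rewrite /toeplitz ifF ?mul0r //; lia.
rewrite add0r addr0 /convolution /toeplitz ifT //.
rewrite -[in RHS](add0n s) big_addn big_mkord.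
have -> : (r.+1 - s = (r - s).+1)%N by lia.
apply: eq_bigr => u _; have ur := ltn_ord u.
rewrite !ifT; try lia.
by rewrite mulrC; congr (b _ * a _); lia.
Qed.

Lemma toeplitz_ge0 a r s : (forall n, 0 <= a n) -> 0 <= toeplitz a r s.
Proof. by move=> a_ge0; rewrite /toeplitz; case: ifP. Qed.

Lemma PF2_convolution a b : PF2 a -> PF2 b -> PF2 (convolution a b).
Proof.
move=> [a_ge0 a_minor] [b_ge0 b_minor]; split.
  by move=> n; apply: sumr_ge0 => j _; apply: mulr_ge0.
move=> r1 r2 s1 s2 r12 s12.
rewrite -subr_ge0 !(@toeplitz_convolution a b r2.+1) ?ltnS //.
rewrite (cauchy_binet_2x2 _ (toeplitz b r1) (toeplitz b r2)
           (toeplitz a ^~ s1) (toeplitz a ^~ s2)).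
apply: sumr_ge0 => t _; apply: sumr_ge0 => s _.
apply: mulr_ge0; rewrite subr_ge0; first by apply: b_minor => //; apply: ltnW.
by rewrite mulrC; apply: a_minor => //; apply: ltnW.
Qed.

Section LogConcave.
Variable a : nat -> int.
Hypothesis a_ge0 : forall n, 0 <= a n.
Hypothesis a_lc : forall n, a n * a n.+2 <= a n.+1 * a n.+1.
Hypothesis a_nz :
  forall i j k, (i <= j)%N -> (j <= k)%N -> 0 < a i -> 0 < a k -> 0 < a j.

Lemma lc_ratio n m : (n <= m)%N -> (forall j, (n <= j <= m.+1)%N -> 0 < a j) ->
  a n * a m.+1 <= a n.+1 * a m.
Proof.
elim: m => [|m IH] nm a_pos.
  have -> : n = 0%N by lia.
  by rewrite mulrC.
have [->|ne] := eqVneq n m.+1; first by rewrite mulrC.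
have ratio_m := IH (ltac:(lia)) (fun j hj => a_pos j (ltac:(lia))).
have := a_pos m.+1 (ltac:(lia)); have := a_lc m.
have := a_ge0 m.+2; have := a_ge0 n.+1.
nra.
Qed.

Lemma lc_spread d : forall u v w, (v - u = d)%N -> (u <= v)%N -> (v <= w)%N ->
  (forall j, (u <= j <= v + w - u)%N -> 0 < a j) ->
  a u * a (v + w - u)%N <= a v * a w.
Proof.
elim: d => [|d IH] u v w vud uv vw a_pos.
  have -> : v = u by lia.
  have -> : (u + w - u = w)%N by lia.
  by [].
have step : a u * a (v + w - u)%N <= a u.+1 * a (v + w - u.+1)%N.
  have := @lc_ratio u (v + w - u).-1 (ltac:(lia)).
  have -> : ((v + w - u).-1.+1 = v + w - u)%N by lia.
  have -> : ((v + w - u).-1 = v + w - u.+1)%N by lia.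
  by apply => j hj; apply: a_pos; lia.
apply: le_trans step _.
apply: IH => //; try lia.
by move=> j hj; apply: a_pos; lia.
Qed.

Lemma lc_PF2 : PF2 a.
Proof.
split => // r1 r2 s1 s2 r12 s12.
case: (leqP s2 r1) => sr; last first.
  rewrite {1}/toeplitz ifF; last lia.
  by rewrite mul0r; apply: mulr_ge0; apply: toeplitz_ge0.
rewrite /toeplitz !ifT; try lia.
have [->|nz1] := eqVneq (a (r1 - s2)%N) 0; first by rewrite mul0r mulr_ge0.
have [->|nz2] := eqVneq (a (r2 - s1)%N) 0; first by rewrite mulr0 mulr_ge0.
have a_pos j : (r1 - s2 <= j <= r2 - s1)%N -> 0 < a j.
  by case/andP=> h1 h2; apply: (a_nz h1 h2); rewrite lt_def ?nz1 ?nz2 a_ge0.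
case: (leqP (r1 - s1) (r2 - s2)) => hc.
  have := @lc_spread _ (r1 - s2) (r1 - s1) (r2 - s2) erefl (ltac:(lia)) hc.
  have -> : (r1 - s1 + (r2 - s2) - (r1 - s2) = r2 - s1)%N by lia.
  by apply.
have := @lc_spread _ (r1 - s2) (r2 - s2) (r1 - s1) erefl (ltac:(lia)) (ltac:(lia)).
have -> : (r2 - s2 + (r1 - s1) - (r1 - s2) = r2 - s1)%N by lia.
by rewrite [X in _ <= X]mulrC; apply.
Qed.
End LogConcave.

Lemma PF2_lc a : PF2 a -> forall n, a n * a n.+2 <= a n.+1 * a n.+1.
Proof.
move=> [_ a_minor] n; have := a_minor n.+1 n.+2 0%N 1%N (leqnSn _) (leqnSn _).
by rewrite /toeplitz /= !subn0 !subn1.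
Qed.

Lemma PF2_nz a : PF2 a ->
  forall i j k, (i <= j)%N -> (j <= k)%N -> 0 < a i -> 0 < a k -> 0 < a j.
Proof.
move=> [a_ge0 a_minor] i j k ij jk ai_pos ak_pos.
have := a_minor j k 0%N (j - i)%N jk (leq0n _).
rewrite /toeplitz !ifT ?subn0; try lia.
have -> : (j - (j - i) = i)%N by lia.
rewrite lt_def a_ge0 andbT; apply: contraTneq => ->.
by rewrite mul0r -ltNge mulr_gt0.
Qed.

Lemma PF2_decreasing a k : PF2 a -> a k.+1 < a k ->
  forall i, (k <= i)%N -> a i.+1 <= a i.
Proof.
move=> a_PF2 dec_k i ki; have a_ge0 := a_PF2.1.
have ak_pos : 0 < a k by apply: le_lt_trans dec_k.
have -> : i = (k + (i - k))%N by lia.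
elim: (i - k)%N => [|d IH]; first by rewrite addn0 ltW.
rewrite addnS.
have [y0|ynz] := eqVneq (a (k + d).+1) 0.
  rewrite y0 leNgt; apply/negP => y2_pos.
  have := PF2_nz a_PF2 (ltac:(lia) : (k <= (k + d).+1)%N) (leqnSn _) ak_pos y2_pos.
  by rewrite y0 ltxx.
have y_pos : 0 < a (k + d).+1 by rewrite lt_def ynz a_ge0.
have := PF2_lc a_PF2 (k + d); have := a_ge0 (k + d).+2.
nra.
Qed.

Definition PF2_poly (p : {poly int}) : Prop := PF2 (fun i => p`_i).

(* The coefficient sequence of a PF2 polynomial is unimodal: its mode is the
   first index at which it strictly decreases (or leaves the support). *)
Lemma PF2_unimodal (p : {poly int}) : PF2_poly p -> unimodal p.
Proof.
move=> p_PF2.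
have ex_stop : exists k, (p`_k.+1 < p`_k) || (size p <= k)%N.
  by exists (size p); rewrite leqnn orbT.
case: (ex_minnP ex_stop) => k stop_k min_k; exists k; split.
  move=> i ik; rewrite leNgt; apply/negP => dec_i.
  by have := min_k i (ltac:(by rewrite dec_i)); rewrite leqNgt ik.
move=> i ki _; case/orP: stop_k => [dec_k | size_k].
  exact: (PF2_decreasing p_PF2 dec_k).
by rewrite !nth_default //; apply: leq_trans size_k _; lia.
Qed.

Lemma PF2_eq a b : a =1 b -> PF2 a -> PF2 b.
Proof.
move=> eab [a_ge0 a_minor].
have eT r s : toeplitz a r s = toeplitz b r s by rewrite /toeplitz eab.
split=> [n | r1 r2 s1 s2 h1 h2]; first by rewrite -eab.
by rewrite -!eT; apply: a_minor.
Qed.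

Lemma PF2_poly_mul (p q : {poly int}) :
  PF2_poly p -> PF2_poly q -> PF2_poly (p * q).
Proof.
move=> p_PF2 q_PF2; apply: (PF2_eq _ (PF2_convolution p_PF2 q_PF2)) => n.
by rewrite coefM.
Qed.

(* The Toeplitz matrix of the constant 1 is the identity matrix. *)
Lemma PF2_poly_1 : PF2_poly 1.
Proof.
have eT r s : toeplitz (fun i => (1 : {poly int})`_i) r s = (r == s)%:R.
  rewrite /toeplitz coefC; case: (leqP s r) => h; last by case: eqVneq => //; lia.
  by case: (eqVneq r s) => [->|ne]; rewrite ?subnn // ifF //; apply/eqP; lia.
split=> [n | r1 r2 s1 s2 h1 h2]; first by rewrite coefC; case: ifP.
rewrite !eT.
have [e1|] := eqVneq r1 s2; last by rewrite mul0r mulr_ge0.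
have [e2|] := eqVneq r2 s1; last by rewrite mulr0 mulr_ge0.
have -> : r1 = s1 by lia.
have -> : r2 = s2 by lia.
by rewrite !eqxx.
Qed.

Lemma PF2_poly_prod (I : finType) (F : I -> {poly int}) :
  (forall i, PF2_poly (F i)) -> PF2_poly (\prod_i F i).
Proof.
move=> F_PF2; apply: (big_ind PF2_poly) => //.
- exact: PF2_poly_1.
- exact: PF2_poly_mul.
Qed.

Lemma coef_1X_exp (m i : nat) : ((1 + 'X : {poly int}) ^+ m)`_i = ('C(m, i))%:R.
Proof.
elim: m i => [|m IH] i.
  by rewrite expr0 coefC; case: i => [|i]; rewrite ?bin0 ?bin0n.
rewrite exprS mulrDl mul1r coefD coefXM IH.
case: i => [|i] /=; first by rewrite addr0 !bin0.
by rewrite IH binS natrD addrC.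
Qed.

(* x ((1 + x)^m - 1) = sum_(1 <= j <= m) C(m, j) x^(j+1): it counts the subsets
   of an (m+1)-set containing a given point and at least one other point. *)
Definition pointed_poly (m : nat) : {poly int} := 'X * ((1 + 'X) ^+ m - 1).

Lemma coef_pointed_poly m i :
  (pointed_poly m)`_i = if (2 <= i)%N then ('C(m, i.-1))%:R else 0.
Proof.
rewrite /pointed_poly coefXM coefB coef_1X_exp coefC.
by case: i => [|[|i]] //=; rewrite ?bin0 ?subrr ?subr0.
Qed.

Lemma binomial_lc m j : ('C(m, j) * 'C(m, j.+2) <= 'C(m, j.+1) * 'C(m, j.+1))%N.
Proof.
case: (ltnP m j.+2) => hm; first by rewrite (bin_small hm) muln0.
(* C(m,j+1) (j+1) = C(m,j) (m-j) and C(m,j+2) (j+2) = C(m,j+1) (m-j-1) *)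
have e1 := mul_bin_left m j; have e2 := mul_bin_left m j.+1.
rewrite (_ : m - j = (m - j.+2).+2)%N in e1; last lia.
rewrite (_ : m - j.+1 = (m - j.+2).+1)%N in e2; last lia.
move: e1 e2; set c0 := 'C(m, j); set c1 := 'C(m, j.+1); set c2 := 'C(m, j.+2).
set t := (m - j.+2)%N; nia.
Qed.

Lemma PF2_pointed_poly m : PF2_poly (pointed_poly m).
Proof.
have coef_ge0 n : 0 <= (pointed_poly m)`_n.
  by rewrite coef_pointed_poly; case: ifP.
apply: lc_PF2 => // [n | i j k ij jk].
  rewrite !coef_pointed_poly; case: n => [|[|n]] /=; rewrite ?mul0r ?mulr_ge0 //.
  by rewrite -!natrM ler_nat binomial_lc.
rewrite !coef_pointed_poly; case: ifP => i2 //; case: ifP => k2 //.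
rewrite !ltr0n !bin_gt0 ifT; last lia.
by rewrite ltr0n bin_gt0; lia.
Qed.

Definition size_gf (T : finType) (P : pred {set T}) : {poly int} :=
  \sum_(D : {set T} | P D) 'X^#|D|.

Lemma coef_size_gf (T : finType) (P : pred {set T}) i :
  (size_gf P)`_i = (#|[set D | P D & #|D| == i]|)%:R.
Proof.
rewrite /size_gf coef_sum; under eq_bigr do rewrite coefXn.
rewrite -natr_sum -sum1_card; congr (_%:R).
rewrite big_mkcond [RHS]big_mkcond /=; apply: eq_bigr => D _.
by rewrite inE; case: (P D); rewrite //= eq_sym; case: (_ == _).
Qed.

Lemma size_gf_ext (T : finType) (P P' : pred {set T}) :
  P =1 P' -> size_gf P = size_gf P'.
Proof. by move=> eP; apply: eq_bigl. Qed.

Lemma Dt_size_gf (T : finType) (e : rel T) : Dt e = size_gf (total_dominating e).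
Proof.
apply/polyP => j; rewrite coef_poly coef_size_gf /dt.
case: ltnP => // T_j.
suff -> : [set D | total_dominating e D & #|D| == j] = set0 by rewrite cards0.
apply/setP => D; rewrite !inE; apply/negbTE; apply/andP => -[_ /eqP D_j].
by have := max_card D; rewrite D_j leqNgt T_j.
Qed.

Lemma size_gf_subsets (T : finType) (B : {set T}) :
  size_gf (fun E => E \subset B) = (1 + 'X) ^+ #|B|.
Proof. by apply/polyP => j; rewrite coef_size_gf coef_1X_exp cards_draws. Qed.

Definition pointed_in (T : finType) (A : {set T}) (c : T) (E : {set T}) : bool :=
  [&& E \subset A, c \in E & [exists v in E, v != c]].

(* Subsets of A containing c are c |: F with F a subset of A :\ c. *)
Lemma size_gf_containing (T : finType) (A : {set T}) (c : T) : c \in A ->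
  size_gf (fun E => (E \subset A) && (c \in E)) = 'X * (1 + 'X) ^+ #|A :\ c|.
Proof.
move=> cA; rewrite -size_gf_subsets /size_gf mulr_sumr.
rewrite (reindex_onto (fun F : {set T} => c |: F) (fun E => E :\ c)); last first.
  by move=> E /andP [_ cE]; rewrite setD1K.
apply: eq_big => F.
  apply/idP/idP => [/andP [/andP [AF _] /eqP <-] | sF]; first exact: setSD.
  have cF : c \notin F by apply/negP => /(subsetP sF); rewrite !inE eqxx.
  rewrite setU1K // eqxx setU11 !andbT subUset sub1set cA.
  exact: subset_trans sF (subsetDl _ _).
move=> /andP [_ /eqP eF]; have cF : c \notin F by rewrite -eF !inE eqxx.
by rewrite cardsU1 cF add1n exprS.
Qed.

(* Among the subsets of A containing c, only the singleton {c} is not pointed. *)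
Lemma size_gf_pointed (T : finType) (A : {set T}) (c : T) : c \in A ->
  size_gf (pointed_in A c) = pointed_poly #|A :\ c|.
Proof.
move=> cA.
have split_singleton : size_gf (fun E => (E \subset A) && (c \in E))
    = size_gf (pointed_in A c) + 'X.
  rewrite /size_gf (bigID (fun E : {set T} => [exists v in E, v != c])) /=.
  congr (_ + _); first by apply: eq_bigl => E; rewrite /pointed_in andbA.
  rewrite (big_pred1 [set c]) ?cards1 ?expr1 // => E /=.
  apply/idP/eqP => [/andP [/andP [_ cE] /existsPn only_c] | ->].
    apply/setP => x; rewrite in_set1; apply/idP/eqP => [xE | ->//].
    by apply/eqP; have := only_c x; rewrite xE negbK.
  rewrite sub1set cA set11 /=; apply/existsPn => v.
  by rewrite in_set1; case: eqP.
by rewrite /pointed_poly mulrBr mulr1 -size_gf_containing // split_singleton addrK.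
Qed.

Lemma card_by_blocks (T I : finType) (p : T -> I) (D : {set T}) :
  #|D| = (\sum_i #|D :&: [set u | p u == i]|)%N.
Proof.
rewrite -sum1_card (partition_big p xpredT) //=.
by apply: eq_bigr => i _; rewrite -sum1_card; apply: eq_bigl => u; rewrite !inE.
Qed.

Lemma size_gf_blocks (T I : finType) (p : T -> I) (Q : I -> pred {set T}) :
  \prod_i size_gf (fun E => (E \subset [set u | p u == i]) && Q i E)
  = size_gf (fun D => [forall i, Q i (D :&: [set u | p u == i])]).
Proof.
rewrite /size_gf bigA_distr_big_dep.
rewrite (reindex_onto (fun D : {set T} => [ffun i => D :&: [set u | p u == i]])
           (fun f => \bigcup_i f i)); last first.
  move=> f /familyP f_blocks; apply/ffunP => i; rewrite ffunE.
  have block_f j : f j \subset [set u | p u == j].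
    by have := f_blocks j; rewrite unfold_in => /andP [].
  apply/setP => u; rewrite !inE; apply/andP/idP => [[/bigcupP [j _ uj] /eqP pu] | ui].
    by have := subsetP (block_f j) u uj; rewrite inE pu => /eqP ->.
  split; first by apply/bigcupP; exists i.
  by have := subsetP (block_f i) u ui; rewrite inE.
apply: eq_big => D.
  apply/andP/forallP => [[/familyP D_blocks _] i | D_ok].
    by have := D_blocks i; rewrite unfold_in ffunE => /andP [].
  split; first by apply/familyP => i; rewrite unfold_in ffunE subsetIr D_ok.
  apply/eqP/setP => u; apply/bigcupP/idP => [[i _] | uD].
    by rewrite ffunE inE => /andP [].
  by exists (p u) => //; rewrite ffunE !inE uD eqxx.
move=> _; under eq_bigr do rewrite ffunE.
by rewrite prodrXr -card_by_blocks.
Qed.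

(* In L(n,1) a set is total dominating iff it contains the vertex 0 of K_n
   (the only neighbour of the pendant vertex n) and some other vertex (to
   dominate 0 itself); 0 then dominates everything else. *)
Lemma lollipop_total_dominating n (D : {set 'I_n.+1}) : (1 <= n)%N ->
  total_dominating (@lollipop_adj n) D = pointed_in setT ord0 D.
Proof.
move=> n_ge1; rewrite /pointed_in subsetT /=.
apply/forallP/andP => [dom | [D0 /existsP [u /andP [uD u_ne0]]] v].
  split.
    have /existsP [u /andP [uD]] := dom ord_max.
    rewrite /lollipop_adj /= => /andP [_ adj].
    suff -> : ord0 = u by [].
    by apply/val_inj => /=; move: adj (ltn_ord u); lia.
  have /existsP [u /andP [uD /andP [u_ne0 _]]] := dom ord0.
  by apply/existsP; exists u; rewrite uD eq_sym.
apply/existsP; have [->|v_ne0] := eqVneq v ord0.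
  exists u; rewrite uD /lollipop_adj eq_sym u_ne0 /=.
  by move: u_ne0 (ltn_ord u); rewrite -val_eqE /=; lia.
exists ord0; rewrite D0 /lollipop_adj v_ne0 /=.
by move: v_ne0 (ltn_ord v); rewrite -val_eqE /=; lia.
Qed.

Lemma Dt_lollipop n : (1 <= n)%N ->
  Dt (@lollipop_adj n) = pointed_poly #|[set: 'I_n.+1] :\ ord0|.
Proof.
move=> n_ge1; rewrite Dt_size_gf -size_gf_pointed ?inE //.
by apply: size_gf_ext => D; apply: lollipop_total_dominating.
Qed.

Section GeneralizedFirecracker.
Variables (n : nat) (ks : 'I_n -> nat).
Hypothesis ks_ge3 : forall i, (3 <= ks i)%N.

Local Notation vertex := {i : 'I_n & 'I_(ks i)}.

Definition star (i : 'I_n) : {set vertex} := [set u | tag u == i].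

Lemma ks_gt0 i : (0 < ks i)%N.
Proof. exact: leq_trans (ks_ge3 i). Qed.

Definition center (i : 'I_n) : vertex := Tagged (fun i => 'I_(ks i)) (Ordinal (ks_gt0 i)).

Lemma eq_center u : (u == center (tag u)) = (tagged u == 0 :> nat).
Proof.
case: u => i x /=; apply/eqP/eqP => [/(congr1 (fun u : vertex => val (tagged u))) // | x0].
by congr (Tagged _ _); apply: val_inj.
Qed.

Lemma center_adj i u :
  gfirecracker_adj (center i) u = (u \in star i) && (u != center i).
Proof.
rewrite /gfirecracker_adj /= andbF orbF inE eq_sym.
by case: eqP => //= <-; rewrite orbF eq_center.
Qed.

(* A leaf other than l_i (it exists as k_i >= 3) is adjacent only to the center. *)
Lemma other_leaf_adj i u :
  gfirecracker_adj (Tagged (fun i => 'I_(ks i)) (Ordinal (ks_ge3 i))) u -> u = center i.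
Proof.
rewrite /gfirecracker_adj /= orbF andbT => /andP [/eqP -> u0].
by apply/eqP; rewrite eq_center.
Qed.

(* A set is total dominating in F(k_1,...,k_n) iff within every star it
   contains the center (the only neighbour of the other leaves) and another
   vertex (to dominate the center); the centers then dominate every leaf. *)
Lemma gfirecracker_total_dominating (D : {set vertex}) :
  total_dominating (@gfirecracker_adj n ks) D =
  [forall i, pointed_in (star i) (center i) (D :&: star i)].
Proof.
apply/forallP/forallP => [dom i | pointed v].
  rewrite /pointed_in subsetIr /=; apply/andP; split.
    have /existsP [u /andP [uD /other_leaf_adj u_center]] := dom (Tagged _ (Ordinal (ks_ge3 i))).
    by rewrite inE -u_center uD u_center inE /= eqxx.
  have /existsP [u /andP [uD]] := dom (center i); rewrite center_adj => /andP [ui u_ne].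
  by apply/existsP; exists u; rewrite inE uD ui u_ne.
have /andP [_ /andP [cD /existsP [u /andP [uD u_ne]]]] := pointed (tag v).
apply/existsP; have [v_center | v_ne] := eqVneq v (center (tag v)).
  exists u; rewrite inE in uD; case/andP: uD => uD ui.
  by rewrite uD v_center center_adj ui u_ne.
exists (center (tag v)); rewrite inE in cD; case/andP: cD => cD _; rewrite cD /=.
rewrite /gfirecracker_adj /= eqxx /=; rewrite eq_center in v_ne.
by rewrite v_ne orbT.
Qed.

Lemma Dt_gfirecracker :
  Dt (@gfirecracker_adj n ks) = \prod_i pointed_poly #|star i :\ center i|.
Proof.
rewrite Dt_size_gf (size_gf_ext gfirecracker_total_dominating) /star.
rewrite -(size_gf_blocks tag (fun i => pointed_in (star i) (center i))).
apply: eq_bigr => i _.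
rewrite -size_gf_pointed ?inE //; apply: size_gf_ext => E /=.
by apply/andb_idl => /and3P [].
Qed.
End GeneralizedFirecracker.

Lemma lollipop_unimodal n : (1 <= n)%N -> unimodal (Dt (@lollipop_adj n)).
Proof.
by move=> n_ge1; apply: PF2_unimodal; rewrite Dt_lollipop //; apply: PF2_pointed_poly.
Qed.

Lemma gfirecracker_unimodal n (ks : 'I_n -> nat) : (forall i, 3 <= ks i)%N ->
  unimodal (Dt (@gfirecracker_adj n ks)).
Proof.
move=> ks_ge3; apply: PF2_unimodal; rewrite (Dt_gfirecracker ks_ge3).
by apply: PF2_poly_prod => i; apply: PF2_pointed_poly.
Qed.

Theorem mainTheorem8 :
  forall (n k : nat) (ks : 'I_n -> nat),
    (1 <= n)%N -> (3 <= k)%N -> (forall i, 3 <= ks i)%N ->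
    [/\ unimodal (Dt (@lollipop_adj n)),
        unimodal (Dt (@firecracker_adj n k)) &
        unimodal (Dt (@gfirecracker_adj n ks))].
Proof.
move=> n k ks n_ge1 k_ge3 ks_ge3; split.
- exact: lollipop_unimodal.
- exact: (@gfirecracker_unimodal n (fun _ => k) (fun=> k_ge3)).
- exact: gfirecracker_unimodal.
Qed.
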